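(* For all integers $2\le n\le m$, $\gamma_{2t}(K_n\Box K_m)\ge \min\{m+2,\,2n\}$. Moreover, $\gamma_{2t}(K_n\Box K_m)=2n$ whenever $m\ge 2n-2$.
   Context: For a graph $G=(V,E)$, a set $S\subseteq V$ is a total $2$-dominating set if every vertex of $V$ (including those in $S$) is adjacent to at least $2$ vertices of $S$; $\gamma_{2t}(G)$ is the minimum cardinality of such a set. $G\Box H$ denotes the Cartesian product: vertex set $V(G)\times V(H)$, with $(u_1,v_1)\sim(u_2,v_2)$ iff either $u_1=u_2$ and $v_1\sim v_2$, or $v_1=v_2$ and $u_1\sim u_2$. $K_n$ is the complete graph on $n$ vertices. *)

From mathcomp Require Import all_boot.
Set Implicit Arguments. Unset Strict Implicit. Unset Printing Implicit Defensive.

Definition total2dom (T : finType) (adj : rel T) (S : {set T}) : bool :=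
  [forall v : T, 2 <= #|[set u in S | adj v u]|].

(* gamma_{2t}: minimum cardinality of a total 2-dominating set
   (default #|T|.+1 if none exists, which never happens in our use). *)
Definition gamma2t (T : finType) (adj : rel T) : nat :=
  \big[minn/#|T|.+1]_(S : {set T} | total2dom adj S) #|S|.

Definition Kadj (n : nat) : rel 'I_n := fun x y => x != y.

Definition cartprod (A B : finType) (adjA : rel A) (adjB : rel B) : rel (A * B) :=
  fun p q => ((p.1 == q.1) && adjB p.2 q.2) || ((p.2 == q.2) && adjA p.1 q.1).

Definition KxK (n m : nat) : rel ('I_n * 'I_m) := cartprod (@Kadj n) (@Kadj m).
Arguments KxK : clear implicits.
Arguments Kadj : clear implicits.

(* Every vertex (i, j) of K_n □ K_m sees its row and its column, so a total
   2-dominating set S meets row i and column j in at least 2 vertices other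
   than (i, j), and in at least 4 counted with multiplicity when (i, j) is in S.
   If every row meets S twice, #|S| >= 2n.  Otherwise some row i meets S at most
   once: if it misses S, every column meets S twice and #|S| >= 2m; if it meets
   S only in (i, j0), column j0 meets S three times and every other column once,
   so #|S| >= m + 2.  Conversely, the two "diagonals" {(i, i), (i, i + 1 mod n)}
   form a total 2-dominating set of size at most 2n. *)

From mathcomp Require Import all_boot zify.

Set Implicit Arguments. Unset Strict Implicit. Unset Printing Implicit Defensive.

Lemma card_sum_fibers (T J : finType) (f : T -> J) (S : {set T}) :
  #|S| = \sum_(j : J) #|[set p in S | f p == j]|.
Proof.
rewrite -sum1_card (partition_big f predT) //=.
by apply: eq_bigr => j _; rewrite -sum1_card; apply: eq_bigl => p; rewrite inE.
Qed.

Lemma ordS_neq n (a : 'I_n) : 1 < n -> ordS a != a.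
Proof.
move=> n_gt1; apply/eqP => /(congr1 val) /=; have := ltn_ord a.
case: (ltngtP a.+1 n) => [lt_an1 _ | // | an1_eq _].
  by rewrite modn_small //; lia.
by rewrite an1_eq modnn; lia.
Qed.

Lemma geq_bigminn (I : eqType) (r : seq I) (P : pred I) (F : I -> nat) x j :
  j \in r -> P j -> \big[minn/x]_(i <- r | P i) F i <= F j.
Proof.
elim: r => // a r IHr; rewrite inE big_cons => /predU1P[<- -> | rj Pj].
  exact: geq_minl.
by case: (P a); [apply: leq_trans (geq_minr _ _) _ |]; exact: IHr.
Qed.

Lemma card_neighbours_gt1 (T : finType) (adj : rel T) (S : {set T}) v x y :
  x \in S -> y \in S -> adj v x -> adj v y -> x != y ->
  1 < #|[set u in S | adj v u]|.
Proof. by move=> xS yS vx vy xDy; apply/card_gt1P; exists x, y; rewrite !inE xS yS vx vy. Qed.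

Section Gamma2t.
Variables (T : finType) (adj : rel T).

Lemma gamma2t_min (S : {set T}) : total2dom adj S -> gamma2t adj <= #|S|.
Proof. by move=> domS; apply: geq_bigminn; rewrite ?mem_index_enum. Qed.

Lemma gamma2t_lb (k : nat) :
  k <= #|T|.+1 -> (forall S : {set T}, total2dom adj S -> k <= #|S|) ->
  k <= gamma2t adj.
Proof.
move=> k_le lbS; apply: (big_ind (fun x => k <= x)) => // x y kx ky.
by rewrite leq_min kx ky.
Qed.

End Gamma2t.

Lemma KxK_row n m (i : 'I_n) (j j' : 'I_m) : KxK n m (i, j) (i, j') = (j != j').
Proof. by rewrite /KxK /cartprod /Kadj /= eqxx andbF orbF. Qed.

Lemma KxK_col n m (i i' : 'I_n) (j : 'I_m) : KxK n m (i, j) (i', j) = (i != i').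
Proof. by rewrite /KxK /cartprod /Kadj /= eqxx andbF. Qed.

Section LowerBound.
Variables (n m : nat).

Definition row_part (S : {set 'I_n * 'I_m}) i := [set p in S | p.1 == i].
Definition col_part (S : {set 'I_n * 'I_m}) j := [set p in S | p.2 == j].

Lemma card_by_rows (S : {set 'I_n * 'I_m}) : #|S| = \sum_i #|row_part S i|.
Proof. exact: card_sum_fibers. Qed.

Lemma card_by_cols (S : {set 'I_n * 'I_m}) : #|S| = \sum_j #|col_part S j|.
Proof. exact: card_sum_fibers. Qed.

Variable S : {set 'I_n * 'I_m}.
Hypothesis domS : total2dom (KxK n m) S.

Local Notation row := (row_part S).
Local Notation col := (col_part S).

Lemma neighbours_in_row_col v :
  [set u in S | KxK n m v u] \subset (row v.1 :\ v) :|: (col v.2 :\ v).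
Proof.
apply/subsetP => u; rewrite !inE /KxK /cartprod /Kadj => /andP[uS].
case/orP => /andP[/eqP same_line other_coord]; apply/orP; [left | right];
  by rewrite uS same_line eqxx !andbT; apply: contraNneq other_coord => ->.
Qed.

Lemma row_col_card v : 2 + 2 * (v \in S) <= #|row v.1| + #|col v.2|.
Proof.
have := leq_trans (forallP domS v) (subset_leq_card (neighbours_in_row_col v)).
move/leq_trans/(_ (leq_card_setU _ _).1).
rewrite (cardsD1 v (row v.1)) (cardsD1 v (col v.2)) !inE !eqxx !andbT.
move: #|row v.1 :\ v| #|col v.2 :\ v| => r c.
by case: (v \in S) => /=; lia.
Qed.

Lemma card_ge_full_rows : (forall i, 2 <= #|row i|) -> 2 * n <= #|S|.
Proof.
move=> rowsS; rewrite card_by_rows.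
have : \sum_(i : 'I_n) 2 <= \sum_i #|row i| by apply: leq_sum => i _.
by rewrite sum_nat_const card_ord mulnC.
Qed.

Lemma card_ge_sparse_row i : #|row i| <= 1 -> 2 <= m -> m + 2 <= #|S|.
Proof.
move=> row_le1 m_ge2; rewrite card_by_cols.
have colS j : 2 + 2 * ((i, j) \in S) <= #|row i| + #|col j|.
  exact: row_col_card (i, j).
case: (boolP (#|row i| == 1)) => [/cards1P[v0 row_v0] | row_ne1].
- have /[!inE] /andP[v0S /eqP v0_row] : v0 \in row i by rewrite row_v0 set11.
  rewrite (bigD1 v0.2) //=.
  have col_v0 : 3 <= #|col v0.2|.
    by have := colS v0.2; rewrite row_v0 cards1 -v0_row -surjective_pairing v0S; lia.
  have other_cols : \sum_(j | j != v0.2) 1 <= \sum_(j | j != v0.2) #|col j|.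
    by apply: leq_sum => j _; have := colS j; rewrite row_v0 cards1; lia.
  move: other_cols; rewrite sum1_card cardC1 card_ord => other_cols.
  by apply: leq_trans (leq_add col_v0 other_cols); lia.
- have row_empty : #|row i| = 0 by lia.
  apply: (@leq_trans (\sum_(j : 'I_m) 2)); first by rewrite sum_nat_const card_ord; lia.
  by apply: leq_sum => j _; have := colS j; rewrite row_empty; lia.
Qed.

Lemma total2dom_card_lb : 2 <= m -> minn (m + 2) (2 * n) <= #|S|.
Proof.
move=> m_ge2; case: (boolP [forall i, 2 <= #|row i|]) => [/forallP | ].
  by move/card_ge_full_rows; apply: leq_trans; rewrite geq_minr.
rewrite negb_forall => /existsP[i]; rewrite -ltnNge ltnS => row_le1.
by apply: leq_trans (geq_minl _ _) (card_ge_sparse_row row_le1 m_ge2).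
Qed.

End LowerBound.

Section TwoDiagonals.
Variables (n m : nat) (n_gt1 : 1 < n) (n_le_m : n <= m).

Let w := widen_ord n_le_m.

Definition two_diagonals : {set 'I_n * 'I_m} :=
  [set (i, w i) | i : 'I_n] :|: [set (i, w (ordS i)) | i : 'I_n].

Lemma diag_in i : (i, w i) \in two_diagonals.
Proof. by apply/setUP; left; apply/imsetP; exists i. Qed.

Lemma superdiag_in i : (i, w (ordS i)) \in two_diagonals.
Proof. by apply/setUP; right; apply/imsetP; exists i. Qed.

Lemma card_two_diagonals : #|two_diagonals| <= 2 * n.
Proof.
apply: leq_trans (leq_card_setU _ _).1 _.
by rewrite mul2n -addnn leq_add // (leq_trans (leq_imset_card _ _)) ?card_ord.
Qed.

Lemma total2dom_two_diagonals : total2dom (KxK n m) two_diagonals.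
Proof.
have w_inj : injective w by move=> x y /(congr1 val) /= /val_inj.
have next_neq (a : 'I_n) : a != ordS a by rewrite eq_sym ordS_neq.
have prev_neq (a : 'I_n) : a != ord_pred a.
  by have := next_neq (ord_pred a); rewrite ord_predK eq_sym.
have wnext_neq (a : 'I_n) : w a != w (ordS a) by rewrite (inj_eq w_inj).
apply/forallP => -[a b].
case: (eqVneq b (w a)) => [-> | b_diag].
  have := superdiag_in (ord_pred a); rewrite ord_predK => prev_in.
  apply: (card_neighbours_gt1 (superdiag_in a) prev_in).
  - by rewrite KxK_row wnext_neq.
  - by rewrite KxK_col prev_neq.
  - by rewrite xpair_eqE negb_and prev_neq.
case: (eqVneq b (w (ordS a))) => [-> | b_next].
  apply: (card_neighbours_gt1 (diag_in a) (diag_in (ordS a))).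
  - by rewrite KxK_row eq_sym wnext_neq.
  - by rewrite KxK_col next_neq.
  - by rewrite xpair_eqE negb_and next_neq.
apply: (card_neighbours_gt1 (diag_in a) (superdiag_in a)).
- by rewrite KxK_row b_diag.
- by rewrite KxK_row b_next.
- by rewrite xpair_eqE negb_and wnext_neq orbT.
Qed.

End TwoDiagonals.

Theorem proposition4 (n m : nat) (h2n : 2 <= n) (hnm : n <= m) :
  minn (m + 2) (2 * n) <= gamma2t (KxK n m) /\
  ((2 * n) - 2 <= m -> gamma2t (KxK n m) = (2 * n)).
Proof.
have m_ge2 : 2 <= m by apply: leq_trans hnm.
have lb : minn (m + 2) (2 * n) <= gamma2t (KxK n m).
  apply: gamma2t_lb => [|S domS]; last exact: total2dom_card_lb.
  by rewrite card_prod !card_ord; apply: leq_trans (geq_minr _ _) _; nia.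
split=> // m_large; apply/eqP; rewrite eqn_leq.
have ub := gamma2t_min (total2dom_two_diagonals h2n hnm).
rewrite (leq_trans ub (card_two_diagonals hnm)) /=.
by move: lb; rewrite (minn_idPr _) //; lia.
Qed.
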